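(* Consider the constant-altitude cruise minimum-fuel optimal control problem $$\min_{v(\cdot)\in[v_{\min},v_{\max}],\ \chi(\cdot),\ t_f}\ \mathcal J:=-m(t_f)$$ subject to $$\frac{dx}{dt}=v\cos\chi+W_x(x,y)=:F_x,\quad \frac{dy}{dt}=v\sin\chi+W_y(x,y)=:F_y,\quad \frac{dm}{dt}=-D(m,v)\,C_s(v)=:F_m,$$ with $x(0),y(0),m(0)$ and $x(t_f),y(t_f)$ prescribed and $t_f$ free, where $W_x,W_y$ are wind components, $D>0$ is the drag and $C_s>0$ the specific fuel consumption. Let $\mathcal H=\lambda_xF_x+\lambda_yF_y+\lambda_mF_m$ be the Hamiltonian, with costates satisfying $\frac{d\lambda}{dt}=-\frac{\partial\mathcal H}{\partial X}$ ($X=(x,y,m)$), $\lambda_m(t_f)=-1$, $\mathcal H(t)\equiv 0$ on $[0,t_f]$, and the heading satisfying $\tan\chi(t)=\lambda_y/\lambda_x$. Assume: (i) $C_s(v)>0$ is non-decreasing in $v$ and $D(m,v)>0$ is non-decreasing in both $v$ and $m$; (ii) $F_{m,vv}:=\frac{\partial^2F_m}{\partial v^2}<0$; (iii) for each $t\in[0,t_f]$ the first-order condition $\frac{\partial\mathcal H}{\partial v}(t)=0$ can be written as $G(m(t),v^*(t),W_x,W_y,\bar h)=0$ ($\bar h$ the cruise altitude), this equation implicitly defines a unique mapping $v^*(t)=f(m(t),W_x,W_y,\bar h)$, and the resulting control satisfies $v_{\min}<v^*(t)<v_{\max}$ for all $t\in[0,t_f]$. Then the minimizer $v^*(t)$ of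 the Hamiltonian satisfies $v_{\min}<v^*(t)<v_{\max}$ for all $t\in[0,t_f]$, and the Hamiltonian is strictly convex in $v$ at $v^*(t)$: $\frac{\partial^2\mathcal H}{\partial v^2}(t)>0$ at every $t$ where $\frac{\partial\mathcal H}{\partial v}(t)=0$, so the stationary point is a local minimum of $\mathcal H$ in $v$.
   Context: Point-mass cruise at constant altitude $\bar h$ with airspeed $v$ treated as a control (quasi-steady flight, thrust equal to drag) and heading angle $\chi$ as a second control. *)

From Stdlib Require Import Reals.
From Coquelicot Require Import Coquelicot.
Open Scope R_scope.

Definition Fm (D : R -> R -> R) (Cs : R -> R) (m v : R) : R := - (D m v * Cs v).

Definition Ham (Wx Wy : R -> R -> R) (D : R -> R -> R) (Cs : R -> R)
  (lx ly lm x y m chi v : R) : R :=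
  lx * (v * cos chi + Wx x y) + ly * (v * sin chi + Wy x y) + lm * Fm D Cs m v.

(** The costate [lm] obeys the linear equation [lm' = - lm * dF_m/dm] with
    [lm(tf) = -1].  A linear equation with bounded coefficient cannot reach [0]
    in finite time (its square decays at most exponentially), so [lm] keeps the
    sign of its terminal value: [lm < 0] on [[0, tf]].  In [v] the Hamiltonian is
    affine plus [lm * F_m], hence [d^2H/dv^2 = lm * F_m,vv > 0] by (ii); it is
    strictly convex in [v] and every stationary point is a (global) minimum. *)

From Stdlib Require Import Reals Lra Psatz.
From Coquelicot Require Import Coquelicot.
Open Scope R_scope.

Lemma is_derive_continuity_pt (f : R -> R) (x l : R) :
  is_derive f x l -> continuity_pt f x.
Proof.
  intro Hf. apply continuity_pt_filterlim. apply (ex_derive_continuous f x). now exists l.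
Qed.

Section Interval.

Variables a b : R.
Hypothesis Hab : a <= b.

Definition clamp (s : R) : R := Rmax a (Rmin b s).

Lemma clamp_in (s : R) : a <= clamp s <= b.
Proof.
  unfold clamp; split; [apply Rmax_l |].
  apply Rmax_lub; [lra | apply Rmin_l].
Qed.

Lemma clamp_id (s : R) : a <= s <= b -> clamp s = s.
Proof.
  intro Hs; unfold clamp.
  rewrite Rmin_right by lra; rewrite Rmax_right by lra; reflexivity.
Qed.

Lemma clamp_dist (s c : R) : a <= c <= b -> Rabs (clamp s - c) <= Rabs (s - c).
Proof.
  intro Hc; unfold clamp.
  destruct (Rle_dec b s).
  - rewrite Rmin_left, Rmax_right by lra. rewrite !Rabs_right by lra. lra.
  - rewrite Rmin_right by lra. destruct (Rle_dec a s).
    + rewrite Rmax_right by lra. lra.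
    + rewrite Rmax_left by lra. rewrite !Rabs_left1 by lra. lra.
Qed.

Definition continuous_on_interval (A : R -> R) : Prop :=
  forall t, a <= t <= b ->
    filterlim A (within (fun s => a <= s <= b) (locally t)) (locally (A t)).

(* Extending [A] constantly outside [[a, b]] turns one-sided continuity at the
   endpoints into plain continuity, so that [continuity_ab_min] applies. *)
Lemma continuity_pt_comp_clamp (A : R -> R) (c : R) :
  continuous_on_interval A -> a <= c <= b -> continuity_pt (fun s => A (clamp s)) c.
Proof.
  intros HA Hc. apply continuity_pt_filterlim.
  rewrite (clamp_id c Hc).
  intros P HP. destruct (HA c Hc P HP) as [eps Heps].
  exists eps. intros s Hs. apply Heps; [| apply clamp_in].
  change (Rabs (clamp s - c) < eps). change (Rabs (s - c) < eps) in Hs.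
  pose proof (clamp_dist s c Hc). lra.
Qed.

Lemma continuous_on_interval_bounded_below (A : R -> R) :
  continuous_on_interval A -> exists K, forall s, a <= s <= b -> K <= A s.
Proof.
  intro HA.
  destruct (continuity_ab_min (fun s => A (clamp s)) a b Hab
              (fun c Hc => continuity_pt_comp_clamp A c HA Hc)) as [s0 [Hs0 _]].
  exists (A (clamp s0)). intros s Hs.
  rewrite <- (clamp_id s Hs). apply Hs0, Hs.
Qed.

Lemma linear_ode_nonvanishing (lm A : R -> R) (K : R) :
  (forall s, a <= s <= b -> is_derive lm s (- (lm s * A s))) ->
  (forall s, a <= s <= b -> K <= A s) ->
  lm b <> 0 -> forall t, a <= t <= b -> lm t <> 0.
Proof.
  intros Hlm HK Hb t Ht Ht0.
  set (g := fun s => lm s ^ 2 * exp (2 * K * s)).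
  set (dg := fun s => 2 * lm s * (- (lm s * A s)) * exp (2 * K * s)
                      + lm s ^ 2 * (2 * K * exp (2 * K * s))).
  assert (Hg : forall s, a <= s <= b -> is_derive g s (dg s)).
  { intros s Hs. unfold g, dg.
    apply (is_derive_mult (fun s => lm s ^ 2) (fun s => exp (2 * K * s))).
    - apply is_derive_ext with (f := fun s => lm s * lm s); [intro; simpl; ring |].
      replace (2 * lm s * - (lm s * A s))
        with (- (lm s * A s) * lm s + lm s * - (lm s * A s)) by ring.
      apply (is_derive_mult lm lm); [apply Hlm, Hs | apply Hlm, Hs |].
      intros; apply Rmult_comm.
    - apply (is_derive_comp exp (fun s => 2 * K * s)).
      + apply is_derive_Reals, derivable_pt_lim_exp.
      + auto_derive; [exact I | ring].
    - intros; apply Rmult_comm. }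
  (* [dg s = 2 lm^2 e^{2Ks} (K - A s) <= 0]: [g] is nonincreasing, yet [g t = 0 < g b]. *)
  destruct (MVT_gen g t b dg) as [c [Hc Hgc]].
  - intros s Hs. rewrite Rmin_left, Rmax_right in Hs by lra. apply Hg. lra.
  - intros s Hs. rewrite Rmin_left, Rmax_right in Hs by lra.
    apply (is_derive_continuity_pt _ _ _ (Hg s ltac:(lra))).
  - rewrite Rmin_left, Rmax_right in Hc by lra.
    assert (Hdg : dg c <= 0).
    { unfold dg. pose proof (HK c ltac:(lra)). pose proof (exp_pos (2 * K * c)).
      assert (0 <= (A c - K) * (lm c ^ 2 * exp (2 * K * c))) by (apply Rmult_le_pos; [lra | nra]).
      simpl in *. nra. }
    assert (Hgb : 0 < g b).
    { unfold g. apply Rmult_lt_0_compat; [| apply exp_pos].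
      pose proof (Rsqr_pos_lt (lm b) Hb); unfold Rsqr in *; simpl; nra. }
    assert (Hgt : g t = 0) by (unfold g; rewrite Ht0; simpl; ring).
    assert (dg c * (b - t) <= 0) by (apply Rmult_le_0_r; lra).
    lra.
Qed.

Lemma nonvanishing_keeps_sign (lm : R -> R) :
  (forall s, a <= s <= b -> continuity_pt lm s) ->
  (forall s, a <= s <= b -> lm s <> 0) ->
  lm b < 0 -> forall t, a <= t <= b -> lm t < 0.
Proof.
  intros Hc Hnz Hb t Ht.
  destruct (Rlt_le_dec (lm t) 0) as [| Hge]; [assumption | exfalso].
  assert (Htb : t < b) by (destruct (Req_dec t b); [subst; lra | lra]).
  destruct (Ranalysis5.IVT_interv (fun s => - lm s) t b) as [z [Hz Hz0]].
  - intros s Hs. apply continuity_pt_opp, Hc. lra.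
  - exact Htb.
  - specialize (Hnz t Ht). lra.
  - lra.
  - apply (Hnz z); lra.
Qed.

Lemma linear_ode_terminal_neg (lm A : R -> R) :
  (forall s, a <= s <= b -> is_derive lm s (- (lm s * A s))) ->
  continuous_on_interval A ->
  lm b < 0 -> forall t, a <= t <= b -> lm t < 0.
Proof.
  intros Hlm HA Hb.
  destruct (continuous_on_interval_bounded_below A HA) as [K HK].
  apply nonvanishing_keeps_sign; [| | exact Hb].
  - intros s Hs. exact (is_derive_continuity_pt _ _ _ (Hlm s Hs)).
  - apply (linear_ode_nonvanishing lm A K Hlm HK). lra.
Qed.

End Interval.

Lemma stationary_convex_min (h h' h'' : R -> R) (v : R) :
  (forall w, is_derive h w (h' w)) ->
  (forall w, is_derive h' w (h'' w)) ->
  (forall w, 0 < h'' w) ->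
  h' v = 0 -> forall w, h v <= h w.
Proof.
  intros Hh Hh' Hpos Hv w.
  assert (Hincr : forall u1 u2, u1 < u2 -> h' u1 < h' u2).
  { intros u1 u2 Hu. apply (incr_function h' m_infty p_infty h''); try easy.
    intros; apply Rlt_gt, Hpos. }
  destruct (MVT_gen h v w h') as [c [Hc Hhc]].
  - intros s _. apply Hh.
  - intros s _. exact (is_derive_continuity_pt _ _ _ (Hh s)).
  - assert (0 <= h' c * (w - v)).
    { destruct (Rle_dec v w).
      - rewrite Rmin_left, Rmax_right in Hc by lra.
        destruct (Req_dec c v) as [-> | Hcv]; [rewrite Hv; lra |].
        pose proof (Hincr v c ltac:(lra)). nra.
      - rewrite Rmin_right, Rmax_left in Hc by lra.
        destruct (Req_dec c v) as [-> | Hcv]; [rewrite Hv; lra |].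
        pose proof (Hincr c v ltac:(lra)). nra. }
    lra.
Qed.

Section Hamiltonian.

Variables (Wx Wy D : R -> R -> R) (Cs : R -> R) (lx ly lm x y m chi : R).

Let H := Ham Wx Wy D Cs lx ly lm x y m chi.

Lemma is_derive_Ham_v (w : R) :
  ex_derive (Fm D Cs m) w ->
  is_derive H w (lx * cos chi + ly * sin chi + lm * Derive (Fm D Cs m) w).
Proof.
  intro HF. unfold H, Ham.
  apply (is_derive_plus
           (fun w => lx * (w * cos chi + Wx x y) + ly * (w * sin chi + Wy x y))
           (fun w => lm * Fm D Cs m w)).
  - auto_derive; [exact I | ring].
  - apply (is_derive_scal (Fm D Cs m)). exact (Derive_correct _ _ HF).
Qed.

Lemma is_derive2_Ham_v (w : R) :
  (forall u, ex_derive (Fm D Cs m) u) ->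
  ex_derive (Derive (Fm D Cs m)) w ->
  is_derive (Derive H) w (lm * Derive (Derive (Fm D Cs m)) w).
Proof.
  intros HF HF2.
  apply is_derive_ext
    with (f := fun u => lx * cos chi + ly * sin chi + lm * Derive (Fm D Cs m) u).
  { intro u. symmetry. apply is_derive_unique, is_derive_Ham_v, HF. }
  auto_derive; [exact HF2 |]. rewrite Rmult_1_l. reflexivity.
Qed.

End Hamiltonian.

Theorem theorem2
  (hbar vmin vmax x0 y0 m0 xf yf tf : R)
  (Wx Wy : R -> R -> R) (D : R -> R -> R) (Cs : R -> R)
  (G : R -> R -> R -> R -> R -> R) (f : R -> R -> R -> R -> R)
  (x y m v chi lx ly lm : R -> R) :
  0 < tf ->
  (* boundary conditions *)
  x 0 = x0 -> y 0 = y0 -> m 0 = m0 -> x tf = xf -> y tf = yf ->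
  (* state equations *)
  (forall t, 0 <= t <= tf -> is_derive x t (v t * cos (chi t) + Wx (x t) (y t))) ->
  (forall t, 0 <= t <= tf -> is_derive y t (v t * sin (chi t) + Wy (x t) (y t))) ->
  (forall t, 0 <= t <= tf -> is_derive m t (Fm D Cs (m t) (v t))) ->
  (* costate equations  dlambda/dt = - dH/dX *)
  (forall t, 0 <= t <= tf -> is_derive lx t
     (- (lx t * Derive (fun a => Wx a (y t)) (x t)
         + ly t * Derive (fun a => Wy a (y t)) (x t)))) ->
  (forall t, 0 <= t <= tf -> is_derive ly t
     (- (lx t * Derive (fun b => Wx (x t) b) (y t)
         + ly t * Derive (fun b => Wy (x t) b) (y t)))) ->
  (forall t, 0 <= t <= tf -> is_derive lm t
     (- (lm t * Derive (fun a => Fm D Cs a (v t)) (m t)))) ->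
  lm tf = -1 ->
  (* H(t) = 0 on [0,tf] *)
  (forall t, 0 <= t <= tf ->
     Ham Wx Wy D Cs (lx t) (ly t) (lm t) (x t) (y t) (m t) (chi t) (v t) = 0) ->
  (* heading law  tan chi = lambda_y / lambda_x *)
  (forall t, 0 <= t <= tf -> tan (chi t) = ly t / lx t) ->
  (* regularity (implicit in the paper) *)
  (forall a b, ex_derive (fun a' => Wx a' b) a) ->
  (forall a b, ex_derive (fun a' => Wy a' b) a) ->
  (forall a b, ex_derive (fun b' => Wx a b') b) ->
  (forall a b, ex_derive (fun b' => Wy a b') b) ->
  (forall mu u, ex_derive (fun a => D a u) mu) ->
  (forall mu u, ex_derive (Fm D Cs mu) u) ->
  (forall mu u, ex_derive (Derive (Fm D Cs mu)) u) ->
  (forall t, 0 <= t <= tf ->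
     filterlim (fun s => Derive (fun a => Fm D Cs a (v s)) (m s))
       (within (fun s => 0 <= s <= tf) (locally t))
       (locally (Derive (fun a => Fm D Cs a (v t)) (m t)))) ->
  (* (i) positivity and monotonicity *)
  (forall u, 0 < Cs u) ->
  (forall u1 u2, u1 <= u2 -> Cs u1 <= Cs u2) ->
  (forall mu u, 0 < D mu u) ->
  (forall mu u1 u2, u1 <= u2 -> D mu u1 <= D mu u2) ->
  (forall mu1 mu2 u, mu1 <= mu2 -> D mu1 u <= D mu2 u) ->
  (* (ii) F_{m,vv} < 0 *)
  (forall mu u, Derive (Derive (Fm D Cs mu)) u < 0) ->
  (* (iii) dH/dv = 0 is G(m,v,Wx,Wy,hbar) = 0, uniquely solved by v = f(m,Wx,Wy,hbar),
     and the resulting control lies strictly inside the bounds *)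
  (forall t, 0 <= t <= tf ->
     (forall w,
        Derive (Ham Wx Wy D Cs (lx t) (ly t) (lm t) (x t) (y t) (m t) (chi t)) w = 0
        <-> G (m t) w (Wx (x t) (y t)) (Wy (x t) (y t)) hbar = 0) /\
     (forall w,
        G (m t) w (Wx (x t) (y t)) (Wy (x t) (y t)) hbar = 0
        <-> w = f (m t) (Wx (x t) (y t)) (Wy (x t) (y t)) hbar) /\
     v t = f (m t) (Wx (x t) (y t)) (Wy (x t) (y t)) hbar /\
     vmin < v t < vmax) ->
  forall t, 0 <= t <= tf ->
    vmin < v t < vmax /\
    (Derive (Ham Wx Wy D Cs (lx t) (ly t) (lm t) (x t) (y t) (m t) (chi t)) (v t) = 0 ->
       0 < Derive (Derive (Ham Wx Wy D Cs (lx t) (ly t) (lm t) (x t) (y t) (m t) (chi t))) (v t)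
       /\ exists eps, 0 < eps /\ forall w, Rabs (w - v t) < eps ->
            Ham Wx Wy D Cs (lx t) (ly t) (lm t) (x t) (y t) (m t) (chi t) (v t)
            <= Ham Wx Wy D Cs (lx t) (ly t) (lm t) (x t) (y t) (m t) (chi t) w).
Proof.
  intros Htf _ _ _ _ _ _ _ _ _ _ Hlm Hlm_tf _ _ _ _ _ _ _ HF HF2 HA _ _ _ _ _ HFvv Hiii t Ht.
  split; [apply Hiii, Ht |].
  intro Hstat.
  assert (Hlm_neg : lm t < 0).
  { apply (linear_ode_terminal_neg 0 tf (Rlt_le _ _ Htf) lm
             (fun s => Derive (fun a => Fm D Cs a (v s)) (m s))); auto; lra. }
  set (H := Ham Wx Wy D Cs (lx t) (ly t) (lm t) (x t) (y t) (m t) (chi t)).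
  assert (HH2 : forall w, is_derive (Derive H) w (lm t * Derive (Derive (Fm D Cs (m t))) w)).
  { intro w. apply is_derive2_Ham_v; auto. }
  assert (Hconvex : forall w, 0 < lm t * Derive (Derive (Fm D Cs (m t))) w).
  { intro w. pose proof (HFvv (m t) w). nra. }
  split.
  - rewrite (is_derive_unique _ _ _ (HH2 (v t))). apply Hconvex.
  - exists 1. split; [lra |]. intros w _.
    apply (stationary_convex_min H (Derive H)
             (fun w => lm t * Derive (Derive (Fm D Cs (m t))) w) (v t)); auto.
    intro u. apply Derive_correct. eexists. apply is_derive_Ham_v, HF.
Qed.
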